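(* For every $\rho<0$, the harmonic map $\psi_\rho:\mathbb{CP}^n\to\mathbb{CP}^n$ is equivariantly weakly stable with respect to the $\mathrm{SU}(p+1)\times\mathrm{SU}(n-p)$-action, i.e. every $\lambda$ in its equivariant spectrum satisfies $\lambda\ge0$.
   Context: Let $n\ge1$ and $0\le p<n$ be integers. $\mathbb{CP}^n$ carries the Fubini–Study metric (the metric making $\mathbb S^{2n+1}\to\mathbb{CP}^n$ a Riemannian submersion). $G=\mathrm{SU}(p+1)\times\mathrm{SU}(n-p)$ acts isometrically by $(A,B)\cdot[Z]=[\operatorname{diag}(A,B)Z]$; with $\gamma(t)=[\cos t\,e_1+\sin t\,e_{p+2}]$ every point of $\mathbb{CP}^n$ is $g\cdot\gamma(t)$ for some $g\in G$, $t\in[0,\pi/2]$. For $\rho\ne0$ let $r_\rho(t)=\arctan(\rho\tan t)$ on $[0,\pi/2)$, $r_\rho(\pi/2)=\operatorname{sign}(\rho)\pi/2$, and $\psi_\rho(g\cdot\gamma(t))=g\cdot\gamma(r_\rho(t))$, a harmonic map. The equivariant spectrum of $\psi_\rho$ is the set of $\lambda\in\mathbb R$ for which the Sturm–Liouville problem \[ \ddot\xi+\big[(2n-2p-1)\cot t-(2p+1)\tan t\big]\dot\xi-\Big[2(n-p-1)\frac{\cos 2r_\rho(t)}{\sin^2t}-2p\frac{\cos2r_\rho(t)}{\cos^2t}+4\frac{\cos4r_\rho(t)}{\sin^22t}\Big]\xi+\lambda\xi=0 \] has a nonzero solution $\xi\in C^\infty_0([0,\tfrac\pi2])$ (smooth,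 vanishing at $0$ and $\pi/2$). $\psi_\rho$ is equivariantly weakly stable if all these $\lambda$ are $\ge0$. *)

From Stdlib Require Import Reals.
From Coquelicot Require Import Coquelicot.
Open Scope R_scope.

Definition r_rho (rho t : R) : R :=
  if Req_EM_T t (PI / 2) then (if Rlt_dec 0 rho then PI / 2 else - (PI / 2))
  else atan (rho * tan t).

Definition smooth (f : R -> R) : Prop := forall (k : nat) (x : R), ex_derive_n f k x.

(* C^infty_0([0, pi/2]): (restriction of) a smooth function vanishing at 0 and pi/2 *)
Definition C_inf_0 (xi : R -> R) : Prop :=
  smooth xi /\ xi 0 = 0 /\ xi (PI / 2) = 0.

Definition SL_eq (n p : nat) (rho lam : R) (xi : R -> R) (t : R) : Prop :=
  let r := r_rho rho t in
  Derive_n xi 2 t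
  + ((2 * INR n - 2 * INR p - 1) * (cos t / sin t) - (2 * INR p + 1) * tan t) * Derive xi t
  - (2 * (INR n - INR p - 1) * cos (2 * r) / (sin t) ^ 2
     - 2 * INR p * cos (2 * r) / (cos t) ^ 2
     + 4 * cos (4 * r) / (sin (2 * t)) ^ 2) * xi t
  + lam * xi t = 0.

Definition equiv_spectrum (n p : nat) (rho lam : R) : Prop :=
  exists xi : R -> R,
    C_inf_0 xi /\
    (exists t, 0 <= t <= PI / 2 /\ xi t <> 0) /\
    (forall t, 0 < t < PI / 2 -> SL_eq n p rho lam xi t).

Definition equiv_weakly_stable (n p : nat) (rho : R) : Prop :=
  forall lam, equiv_spectrum n p rho lam -> 0 <= lam.

From Stdlib Require Import Reals Lra Lia Psatz.
From Coquelicot Require Import Coquelicot.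
Open Scope R_scope.

(* Write n = k + p + 1.  The Sturm-Liouville equation has weight
   w(t) = sin^(2k+1) t cos^(2p+1) t, and its potential is built from
   c(t) = cos (2 r_rho(t)) = (cos^2 t - rho^2 sin^2 t) / (cos^2 t + rho^2 sin^2 t),
   which satisfies the Riccati equation  c' = (c^2 - 1) / (sin t cos t).
   This makes the potential factor, so that for every solution xi the energy
     F = w xi xi' - w c / (sin t cos t) xi^2
   satisfies  F' = - lam w xi^2 + w (xi' - c xi / (sin t cos t))^2.
   If lam < 0 then F is nondecreasing on (0, pi/2); as xi is smooth and vanishes at
   both endpoints, F(t) = O(t) at 0 and O(pi/2 - t) at pi/2, so F vanishes identically,
   hence so does F', which forces xi = 0 on (0, pi/2).  Note that rho enters only
   through rho^2, so the argument does not use the sign of rho. *)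

(* The closed form of cos (2 r_rho(t)) on (0, pi/2). *)
Definition cos2r (rho t : R) : R :=
  (cos t ^ 2 - rho ^ 2 * sin t ^ 2) / (cos t ^ 2 + rho ^ 2 * sin t ^ 2).

Lemma cos_2atan (x : R) : cos (2 * atan x) = (1 - x ^ 2) / (1 + x ^ 2).
Proof.
  rewrite cos_2a, cos_atan, sin_atan.
  assert (Hpos : 0 < 1 + x²) by (unfold Rsqr; nra).
  assert (Hsq : sqrt (1 + x²) * sqrt (1 + x²) = 1 + x²) by (apply sqrt_sqrt; lra).
  assert (Hnz : sqrt (1 + x²) <> 0) by (apply Rgt_not_eq, sqrt_lt_R0; lra).
  unfold Rsqr in *. set (q := sqrt (1 + x * x)) in *.
  replace (1 + x ^ 2) with (q * q) by (rewrite Hsq; ring).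
  field. exact Hnz.
Qed.

Lemma sin_cos_pos (t : R) : 0 < t < PI / 2 -> 0 < sin t /\ 0 < cos t.
Proof.
  intros [Ht0 Ht1]. split; [apply sin_gt_0 | apply cos_gt_0]; lra.
Qed.

Lemma cos_2r_rho (rho t : R) : 0 < t < PI / 2 -> cos (2 * r_rho rho t) = cos2r rho t.
Proof.
  intros Ht. destruct (sin_cos_pos t Ht) as [Hs Hc].
  unfold r_rho. destruct (Req_EM_T t (PI / 2)) as [E | _]; [lra |].
  rewrite cos_2atan. unfold cos2r, tan.
  assert (0 < cos t ^ 2 + rho ^ 2 * sin t ^ 2) by nra.
  field. split; [lra |]. intro E. field_simplify in E; nra.
Qed.

Lemma cos2r_bound (rho t : R) : Rabs (cos2r rho t) <= 1.
Proof.
  unfold cos2r.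
  assert (0 <= rho ^ 2 * sin t ^ 2) by (apply Rmult_le_pos; apply pow2_ge_0).
  assert (0 <= cos t ^ 2) by apply pow2_ge_0.
  set (D := cos t ^ 2 + rho ^ 2 * sin t ^ 2).
  destruct (Req_dec D 0) as [E | E].
  - rewrite E. unfold Rdiv. rewrite Rinv_0, Rmult_0_r, Rabs_R0. lra.
  - assert (HD : 0 < D) by (unfold D in *; lra).
    apply Rabs_le. unfold Rdiv.
    split; apply (Rmult_le_reg_r D); try exact HD;
      rewrite Rmult_assoc, Rinv_l by lra; unfold D; nra.
Qed.

Lemma is_derive_sin_pow (m : nat) (t : R) : sin t <> 0 ->
  is_derive (fun t => sin t ^ m) t (INR m * sin t ^ m * cos t / sin t).
Proof.
  intro H.
  replace (INR m * sin t ^ m * cos t / sin t)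
    with (INR m * cos t * sin t ^ Init.Nat.pred m).
  - apply is_derive_pow, is_derive_sin.
  - destruct m; [simpl | cbn [Init.Nat.pred pow]]; field; exact H.
Qed.

Lemma is_derive_cos_pow (m : nat) (t : R) : cos t <> 0 ->
  is_derive (fun t => cos t ^ m) t (- INR m * cos t ^ m * sin t / cos t).
Proof.
  intro H.
  replace (- INR m * cos t ^ m * sin t / cos t)
    with (INR m * (- sin t) * cos t ^ Init.Nat.pred m).
  - apply is_derive_pow, is_derive_cos.
  - destruct m; [simpl | cbn [Init.Nat.pred pow]]; field; exact H.
Qed.

Lemma cos2r_riccati (rho t : R) : 0 < t < PI / 2 ->
  is_derive (cos2r rho) t ((cos2r rho t ^ 2 - 1) / (sin t * cos t)).
Proof.
  intros Ht. destruct (sin_cos_pos t Ht) as [Hs Hc].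
  assert (HD : 0 < cos t ^ 2 + rho ^ 2 * sin t ^ 2) by nra.
  assert (Hpyth : sin t ^ 2 + cos t ^ 2 = 1)
    by (rewrite <- (sin2_cos2 t); unfold Rsqr; ring).
  unfold cos2r. auto_derive; [lra |].
  transitivity (-4 * rho ^ 2 * sin t * cos t * (sin t ^ 2 + cos t ^ 2)
                / (cos t ^ 2 + rho ^ 2 * sin t ^ 2) ^ 2).
  - field. lra.
  - rewrite Hpyth. field. split; lra.
Qed.

(* The Sturm-Liouville weight, for n = k + p + 1. *)
Definition weight (k p : nat) (t : R) : R := sin t ^ (2 * k + 1) * cos t ^ (2 * p + 1).

Definition energy (k p : nat) (rho : R) (xi : R -> R) (t : R) : R :=
  weight k p t * xi t * Derive xi t
  - sin t ^ (2 * k) * cos t ^ (2 * p) * cos2r rho t * xi t ^ 2.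

Definition energy_rate (k p : nat) (rho lam : R) (xi : R -> R) (t : R) : R :=
  - lam * weight k p t * xi t ^ 2
  + weight k p t * (Derive xi t - cos2r rho t * xi t / (sin t * cos t)) ^ 2.

Lemma weight_pos (k p : nat) (t : R) : 0 < t < PI / 2 -> 0 < weight k p t.
Proof.
  intros Ht. destruct (sin_cos_pos t Ht). unfold weight.
  apply Rmult_lt_0_compat; apply pow_lt; lra.
Qed.

Lemma energy_rate_nonneg (k p : nat) (rho lam : R) (xi : R -> R) (t : R) :
  lam <= 0 -> 0 < t < PI / 2 -> 0 <= energy_rate k p rho lam xi t.
Proof.
  intros Hlam Ht. pose proof (weight_pos k p t Ht). unfold energy_rate.
  apply Rplus_le_le_0_compat.
  - apply Rmult_le_pos; [nra | apply pow2_ge_0].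
  - apply Rmult_le_pos; [lra | apply pow2_ge_0].
Qed.

Lemma is_derive_eq_compat (f : R -> R) (x l l' : R) :
  is_derive f x l -> l = l' -> is_derive f x l'.
Proof. intros H <-; exact H. Qed.

(* Real-valued specialisations of the derivative rules, in the pointwise form that
   [apply] can match against products and differences of functions. *)
Lemma is_derive_minus_R (f g : R -> R) (x a b : R) :
  is_derive f x a -> is_derive g x b -> is_derive (fun t => f t - g t) x (a - b).
Proof. intros; apply (is_derive_minus f g); auto. Qed.

Lemma is_derive_mult_R (f g : R -> R) (x a b : R) :
  is_derive f x a -> is_derive g x b ->
  is_derive (fun t => f t * g t) x (a * g x + f x * b).
Proof. intros Ha Hb. apply (is_derive_mult f g x a b Ha Hb). intros; apply Rmult_comm. Qed.

(* The Picone identity: along a solution of the equation, F' = energy_rate.  The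
   Riccati equation for c is what makes the potential terms cancel. *)
Lemma energy_derivative (n k p : nat) (rho lam : R) (xi : R -> R) (t : R) :
  n = (k + p + 1)%nat -> 0 < t < PI / 2 ->
  ex_derive xi t -> ex_derive (Derive xi) t -> SL_eq n p rho lam xi t ->
  is_derive (energy k p rho xi) t (energy_rate k p rho lam xi t).
Proof.
  intros En Ht Hd1 Hd2 Heq.
  destruct (sin_cos_pos t Ht) as [Hs Hc].
  apply Derive_correct in Hd1. apply Derive_correct in Hd2.
  unfold energy, energy_rate, weight.
  eapply is_derive_eq_compat.
  { apply is_derive_minus_R.
    - apply is_derive_mult_R; [| exact Hd2].
      apply is_derive_mult_R; [| exact Hd1].
      apply is_derive_mult_R; [apply is_derive_sin_pow | apply is_derive_cos_pow]; lra.
    - apply is_derive_mult_R; [| apply is_derive_pow, Hd1].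
      apply is_derive_mult_R; [| apply cos2r_riccati, Ht].
      apply is_derive_mult_R; [apply is_derive_sin_pow | apply is_derive_cos_pow]; lra. }
  unfold SL_eq in Heq. change (Derive_n xi 2 t) with (Derive (Derive xi) t) in Heq.
  rewrite cos_2r_rho in Heq by exact Ht.
  replace (4 * r_rho rho t) with (2 * (2 * r_rho rho t)) in Heq by ring.
  rewrite cos_2a_cos, cos_2r_rho, sin_2a in Heq by exact Ht. unfold tan in Heq.
  rewrite En, !plus_INR in Heq. rewrite !plus_INR, !mult_INR. simpl INR in Heq |- *.
  rewrite !pow_add, !pow_1.
  set (D2 := Derive (Derive xi) t) in *. set (D1 := Derive xi t) in *.
  set (X := xi t) in *. set (S := sin t) in *. set (C := cos t) in *.
  set (c := cos2r rho t) in *.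
  assert (HD2 : D2 =
    - ((2 * (INR k + INR p + 1) - 2 * INR p - 1) * (C / S) - (2 * INR p + 1) * (S / C)) * D1
    + (2 * (INR k + INR p + 1 - INR p - 1) * c / S ^ 2 - 2 * INR p * c / C ^ 2
       + 4 * (2 * c * c - 1) / (2 * S * C) ^ 2) * X
    - lam * X) by lra.
  rewrite HD2. field. split; lra.
Qed.

Lemma abs_pow_le_1 (x : R) (m : nat) : Rabs x <= 1 -> Rabs (x ^ m) <= 1.
Proof.
  intros H. rewrite <- RPow_abs, <- (pow1 m).
  apply pow_incr. split; [apply Rabs_pos | exact H].
Qed.

Lemma energy_bound (k p : nat) (rho : R) (xi : R -> R) (t : R) :
  Rabs (energy k p rho xi t) <= Rabs (xi t) * Rabs (Derive xi t) + xi t ^ 2.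
Proof.
  assert (Hs : Rabs (sin t) <= 1) by (apply Rabs_le, SIN_bound).
  assert (Hc : Rabs (cos t) <= 1) by (apply Rabs_le, COS_bound).
  pose proof (abs_pow_le_1 _ (2 * k + 1) Hs). pose proof (abs_pow_le_1 _ (2 * k) Hs).
  pose proof (abs_pow_le_1 _ (2 * p + 1) Hc). pose proof (abs_pow_le_1 _ (2 * p) Hc).
  pose proof (cos2r_bound rho t).
  unfold energy, weight.
  eapply Rle_trans; [apply Rabs_triang |]. rewrite Rabs_Ropp, !Rabs_mult.
  rewrite (Rabs_right (xi t ^ 2)) by (apply Rle_ge, pow2_ge_0).
  set (a := Rabs (sin t ^ (2 * k + 1))) in *. set (b := Rabs (cos t ^ (2 * p + 1))) in *.
  set (a' := Rabs (sin t ^ (2 * k))) in *. set (b' := Rabs (cos t ^ (2 * p))) in *.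
  set (c := Rabs (cos2r rho t)) in *.
  assert (0 <= a) by apply Rabs_pos. assert (0 <= b) by apply Rabs_pos.
  assert (0 <= a') by apply Rabs_pos. assert (0 <= b') by apply Rabs_pos.
  assert (0 <= c) by apply Rabs_pos.
  pose proof (Rabs_pos (xi t)). pose proof (Rabs_pos (Derive xi t)).
  pose proof (pow2_ge_0 (xi t)).
  assert (a * b <= 1) by nra. assert (a' * b' <= 1) by nra.
  assert (a' * b' * c <= 1) by nra.
  assert (0 <= Rabs (xi t) * Rabs (Derive xi t)) by nra.
  nra.
Qed.

Lemma continuity_pt_of_ex_derive (f : R -> R) (x : R) : ex_derive f x -> continuity_pt f x.
Proof. intro H. apply continuity_pt_filterlim. exact (ex_derive_continuous f x H). Qed.

Lemma derive_bounded (f : R -> R) (a b : R) :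
  a <= b -> (forall x, ex_derive (Derive f) x) ->
  exists M, forall x, a <= x <= b -> Rabs (Derive f x) <= M.
Proof.
  intros Hab Hd.
  destruct (continuity_ab_maj (fun x => Rabs (Derive f x)) a b Hab) as [xm [Hxm _]].
  - intros x _. apply (continuity_pt_comp (Derive f) Rabs).
    + apply continuity_pt_of_ex_derive, Hd.
    + apply Rcontinuity_abs.
  - exists (Rabs (Derive f xm)). exact Hxm.
Qed.

Lemma lipschitz_of_derive_bound (f : R -> R) (a b M x y : R) :
  (forall t, ex_derive f t) -> (forall t, a <= t <= b -> Rabs (Derive f t) <= M) ->
  a <= x -> x <= y -> y <= b -> Rabs (f y - f x) <= M * (y - x).
Proof.
  intros Hd HM Hax Hxy Hyb.
  destruct (MVT_gen f x y (Derive f)) as [c [Hc Hfc]].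
  - intros t _. apply Derive_correct, Hd.
  - intros t _. apply continuity_pt_of_ex_derive, Hd.
  - rewrite Rmin_left, Rmax_right in Hc by lra.
    rewrite Hfc, Rabs_mult, (Rabs_right (y - x)) by lra.
    apply Rmult_le_compat_r; [lra | apply HM; lra].
Qed.

Lemma nondecreasing_of_derive_nonneg (f df : R -> R) (a b x y : R) :
  (forall t, a < t < b -> is_derive f t (df t)) -> (forall t, a < t < b -> 0 <= df t) ->
  a < x -> x <= y -> y < b -> f x <= f y.
Proof.
  intros Hd Hpos Hax Hxy Hyb.
  destruct (MVT_gen f x y df) as [c [Hc Hfc]].
  - intros t Ht. rewrite Rmin_left, Rmax_right in Ht by lra. apply Hd; lra.
  - intros t Ht. rewrite Rmin_left, Rmax_right in Ht by lra.
    apply continuity_pt_of_ex_derive. exists (df t). apply Hd; lra.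
  - rewrite Rmin_left, Rmax_right in Hc by lra.
    assert (0 <= df c) by (apply Hpos; lra). nra.
Qed.

Lemma nonneg_of_linear_lower_bounds (x C d : R) :
  0 < d -> (forall s, 0 < s <= d -> - (C * s) <= x) -> 0 <= x.
Proof.
  intros Hd Hx. apply Rle_plus_epsilon. intros eps Heps.
  set (s := Rmin d (eps / (Rabs C + 1))).
  assert (HC : 0 < Rabs C + 1) by (pose proof (Rabs_pos C); lra).
  assert (Hs0 : 0 < s) by (apply Rmin_glb_lt; [lra | apply Rdiv_lt_0_compat; lra]).
  assert (Hsd : s <= d) by apply Rmin_l.
  assert (Hse : s * (Rabs C + 1) <= eps).
  { pose proof (Rmin_r d (eps / (Rabs C + 1))) as Hs.
    apply (Rmult_le_compat_r (Rabs C + 1)) in Hs; [| lra].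
    unfold Rdiv in Hs. rewrite Rmult_assoc, Rinv_l, Rmult_1_r in Hs by lra. exact Hs. }
  pose proof (Hx s (conj Hs0 Hsd)). pose proof (Rle_abs C). nra.
Qed.

Lemma nondecreasing_squeezed_zero (F dF : R -> R) (a b C : R) :
  (forall t, a < t < b -> is_derive F t (dF t)) -> (forall t, a < t < b -> 0 <= dF t) ->
  (forall t, a < t < b -> Rabs (F t) <= C * (t - a) /\ Rabs (F t) <= C * (b - t)) ->
  forall t, a < t < b -> F t = 0.
Proof.
  intros Hd Hpos Hbound t Ht. apply Rle_antisym.
  - cut (0 <= - F t); [lra |].
    apply (nonneg_of_linear_lower_bounds _ C (b - t)); [lra |]. intros s Hs.
    assert (F t <= F (b - s))
      by (apply (nondecreasing_of_derive_nonneg F dF a b); [exact Hd | exact Hpos | lra..]).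
    destruct (Hbound (b - s)) as [_ Hb]; [lra |].
    replace (b - (b - s)) with s in Hb by ring.
    pose proof (Rle_abs (F (b - s))). lra.
  - apply (nonneg_of_linear_lower_bounds _ C (t - a)); [lra |]. intros s Hs.
    assert (F (a + s) <= F t)
      by (apply (nondecreasing_of_derive_nonneg F dF a b); [exact Hd | exact Hpos | lra..]).
    destruct (Hbound (a + s)) as [Ha _]; [lra |].
    replace (a + s - a) with s in Ha by ring.
    pose proof (Rabs_maj2 (F (a + s))). lra.
Qed.

Lemma derive_of_locally_zero (F : R -> R) (a b t l : R) :
  (forall u, a < u < b -> F u = 0) -> a < t < b -> is_derive F t l -> l = 0.
Proof.
  intros Hzero Ht Hd.
  assert (Hd0 : is_derive (fun _ => 0) t l).
  { apply (is_derive_ext_loc F); [| exact Hd].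
    assert (He : 0 < Rmin (t - a) (b - t)) by (apply Rmin_glb_lt; lra).
    exists (mkposreal _ He). intros u Hu.
    change (Rabs (u - t) < Rmin (t - a) (b - t)) in Hu.
    apply Rabs_def2 in Hu. pose proof (Rmin_l (t - a) (b - t)).
    pose proof (Rmin_r (t - a) (b - t)). apply Hzero. lra. }
  rewrite <- (is_derive_unique _ _ _ Hd0). apply Derive_const.
Qed.

Lemma energy_vanishes_at_ends (k p : nat) (rho : R) (xi : R -> R) :
  (forall x, ex_derive xi x) -> (forall x, ex_derive (Derive xi) x) ->
  xi 0 = 0 -> xi (PI / 2) = 0 ->
  exists C, forall t, 0 < t < PI / 2 ->
    Rabs (energy k p rho xi t) <= C * (t - 0) /\
    Rabs (energy k p rho xi t) <= C * (PI / 2 - t).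
Proof.
  intros Hd1 Hd2 Hxi0 Hxipi.
  pose proof PI_RGT_0. pose proof PI_4.
  destruct (derive_bounded xi 0 (PI / 2)) as [M HM]; [lra | exact Hd2 |].
  assert (HM0 : 0 <= M).
  { pose proof (Rabs_pos (Derive xi 0)). assert (Rabs (Derive xi 0) <= M) by (apply HM; lra).
    lra. }
  exists (3 * M * M). intros t Ht.
  assert (Hleft : Rabs (xi t) <= M * (t - 0)).
  { replace (xi t) with (xi t - xi 0) by (rewrite Hxi0; ring).
    apply (lipschitz_of_derive_bound xi 0 (PI / 2)); auto; lra. }
  assert (Hright : Rabs (xi t) <= M * (PI / 2 - t)).
  { replace (xi t) with (- (xi (PI / 2) - xi t)) by (rewrite Hxipi; ring).
    rewrite Rabs_Ropp.
    apply (lipschitz_of_derive_bound xi 0 (PI / 2)); auto; lra. }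
  assert (Hd : Rabs (Derive xi t) <= M) by (apply HM; lra).
  pose proof (energy_bound k p rho xi t) as HE.
  assert (Hsq : xi t ^ 2 = Rabs (xi t) * Rabs (xi t)).
  { rewrite <- Rabs_mult, Rabs_right; [ring | apply Rle_ge, Rle_0_sqr]. }
  rewrite Hsq in HE.
  pose proof (Rabs_pos (xi t)). pose proof (Rabs_pos (Derive xi t)).
  assert (Hsmall : Rabs (xi t) <= 2 * M) by nra.
  split; nra.
Qed.

(* For lam <= 0 the energy of an eigenfunction is nondecreasing and squeezed to 0
   at both ends, hence identically zero. *)
Lemma energy_identically_zero (n k p : nat) (rho lam : R) (xi : R -> R) :
  n = (k + p + 1)%nat -> lam <= 0 -> C_inf_0 xi ->
  (forall t, 0 < t < PI / 2 -> SL_eq n p rho lam xi t) ->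
  forall t, 0 < t < PI / 2 -> energy k p rho xi t = 0.
Proof.
  intros En Hlam [Hsmooth [Hxi0 Hxipi]] Heq.
  assert (Hd1 : forall x, ex_derive xi x) by exact (Hsmooth 1%nat).
  assert (Hd2 : forall x, ex_derive (Derive xi) x) by exact (Hsmooth 2%nat).
  destruct (energy_vanishes_at_ends k p rho xi Hd1 Hd2 Hxi0 Hxipi) as [C HC].
  apply (nondecreasing_squeezed_zero _ (energy_rate k p rho lam xi) 0 (PI / 2) C).
  - intros t Ht. apply (energy_derivative n); auto.
  - intros t Ht. apply energy_rate_nonneg; assumption.
  - exact HC.
Qed.

(* Hence the energy rate vanishes, and with it the term - lam w xi^2. *)
Lemma eigenfunction_vanishes_inside (n k p : nat) (rho lam : R) (xi : R -> R) :
  n = (k + p + 1)%nat -> lam < 0 -> C_inf_0 xi ->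
  (forall t, 0 < t < PI / 2 -> SL_eq n p rho lam xi t) ->
  forall t, 0 < t < PI / 2 -> xi t = 0.
Proof.
  intros En Hlam Hxi Heq t Ht.
  assert (Hrate : energy_rate k p rho lam xi t = 0).
  { pose proof (proj1 Hxi) as Hsmooth.
    apply (derive_of_locally_zero (energy k p rho xi) 0 (PI / 2) t); [| exact Ht |].
    - apply (energy_identically_zero n k p rho lam); [exact En | lra | exact Hxi | exact Heq].
    - apply (energy_derivative n); auto; [exact (Hsmooth 1%nat t) | exact (Hsmooth 2%nat t)]. }
  unfold energy_rate in Hrate.
  set (w := weight k p t) in Hrate. set (q := Derive xi t - _) in Hrate.
  assert (Hw : 0 < w) by apply (weight_pos k p t Ht).
  assert (0 <= w * q ^ 2) by (apply Rmult_le_pos; [lra | apply pow2_ge_0]).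
  assert (0 <= - lam * w * xi t ^ 2) by (apply Rmult_le_pos; [nra | apply pow2_ge_0]).
  assert (Hsq : xi t ^ 2 = 0).
  { apply (Rmult_eq_reg_l (- lam * w)); [lra | nra]. }
  destruct (Req_dec (xi t) 0) as [| Hne]; [assumption |].
  exfalso. exact (pow_nonzero (xi t) 2 Hne Hsq).
Qed.

Theorem theorem6p2 (n p : nat) (hn : (1 <= n)%nat) (hp : (p < n)%nat)
  (rho : R) (hrho : rho < 0) :
  equiv_weakly_stable n p rho.
Proof.
  intros lam [xi [Hxi [[t0 [Ht0 Hnonzero]] Heq]]].
  destruct (Rle_or_lt 0 lam) as [Hlam | Hlam]; [exact Hlam | exfalso].
  apply Hnonzero.
  pose proof Hxi as (_ & Hxi0 & Hxipi).
  destruct (Req_dec t0 0) as [-> | H0]; [exact Hxi0 |].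
  destruct (Req_dec t0 (PI / 2)) as [-> | Hpi]; [exact Hxipi |].
  apply (eigenfunction_vanishes_inside n (n - p - 1) p rho lam xi); auto; [lia | lra].
Qed.
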